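(* Let $\beta\in(0,\tfrac12)$ and $\lambda_1(\beta)=\sup\mathcal{A}_\beta$. Then $\lambda_1(\beta)$ is a principal eigenvalue of $\Delta_\beta$. Moreover, there is an eigenfunction $u:\mathbb{T}_m\to\mathbb{R}$ associated with $\lambda_1(\beta)$ such that $u(\emptyset)=1$, $u>0$ on $\mathbb{T}_m$, $\Delta_\beta u+\lambda_1(\beta)u=0$ on $\mathbb{T}_m$, $\lim_{x\to y}u(x)=0$ for all $y\in\partial\mathbb{T}_m$, and $u$ is constant on each level and decreasing with respect to the level, i.e. $u(x)=f(|x|)$ for a decreasing $f:\mathbb{N}_0\to\mathbb{R}$.
   Context: Tree: for an integer $m\ge2$, the regular $m$-branching tree $\mathbb{T}_m$ has as vertices the root $\emptyset$ and all finite sequences $(\emptyset,a_1,\dots,a_k)$, $k\in\mathbb{N}$, $a_i\in\{0,\dots,m-1\}$. The level of $x=(\emptyset,a_1,\dots,a_k)$ is $|x|=k$ ($|\emptyset|=0$). The successors of $x$ are $(x,i)$, $i\in\{0,\dots,m-1\}$; for $x\ne\emptyset$, $\hat x$ denotes its unique immediate predecessor. A branch is an infinite sequence $(x_n)_{n\ge0}$ with $x_0=\emptyset$ and $x_{n+1}$ a successor of $x_n$; $\partial\mathbb{T}_m$ is the set of branches. For $y=(x_n)\in\partial\mathbb{T}_m$, $\lim_{x\to y}u(x)=L$ means $\lim_{n\to\infty}u(x_n)=L$. Operator: for $\beta\in[0,1)$ let $p_\beta=1$ if $\beta=0$ and $p_\beta=\beta/(1-\beta)$ if $\beta\in(0,1)$.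 For $u:\mathbb{T}_m\to\mathbb{R}$, $\Delta_\beta u(\emptyset)=\frac1m\sum_{i=0}^{m-1}u(\emptyset,i)-u(\emptyset)$ and, for $x\ne\emptyset$, $\Delta_\beta u(x)=\big(\beta u(\hat x)+\frac{1-\beta}{m}\sum_{i=0}^{m-1}u(x,i)-u(x)\big)p_\beta^{-|x|}$. Eigenvalues: $\lambda\in\mathbb{R}$ is an eigenvalue of $\Delta_\beta$ if there is a bounded $u:\mathbb{T}_m\to\mathbb{R}$, $u\not\equiv0$, with $-\Delta_\beta u=\lambda u$ on $\mathbb{T}_m$ and $\lim_{x\to y}u(x)=0$ for every $y\in\partial\mathbb{T}_m$ ($u$ is an eigenfunction). An eigenvalue $\lambda>0$ is principal if it has a non-negative eigenfunction. The set $\mathcal{A}_\beta$: $\mathcal{A}_\beta=\{\lambda>0:\exists v:\mathbb{T}_m\to\mathbb{R}\text{ and constants }0<c<C\text{ with } c<v<C \text{ on }\mathbb{T}_m \text{ and } \Delta_\beta v+\lambda v\le0 \text{ on }\mathbb{T}_m\}$, and $\lambda_1(\beta)=\sup\mathcal{A}_\beta$. *)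

From HB Require Import structures.
From mathcomp Require Import all_boot all_order all_algebra.
From mathcomp Require Import all_classical all_reals all_analysis.
Set Implicit Arguments. Unset Strict Implicit. Unset Printing Implicit Defensive.
Import Order.TTheory GRing.Theory Num.Theory.
Local Open Scope ring_scope.
Local Open Scope classical_set_scope.

(* Vertices of the m-branching tree T_m: finite words over 'I_m.
   Convention: the word is stored most-recent-letter first, i.e. the vertex
   (root, a1, ..., ak) is the list [:: ak; ...; a1].  Hence the successors of
   x are (i :: x), the predecessor of x <> root is (behead x), the root is
   [::], and the level |x| is (size x). *)
Definition vertex (m : nat) := seq 'I_m.
Definition level (m : nat) (x : vertex m) : nat := size x.

Definition pbeta (R : realType) (beta : R) : R :=
  if beta == 0 then 1 else beta / (1 - beta).

Definition Delta (R : realType) (m : nat) (beta : R) (u : vertex m -> R)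
  (x : vertex m) : R :=
  match x with
  | [::] => m%:R^-1 * (\sum_(i < m) u [:: i]) - u [::]
  | _ :: xh =>
      (beta * u xh + (1 - beta) / m%:R * (\sum_(i < m) u (i :: x)) - u x)
        * (pbeta beta ^- size x)
  end.

Definition is_branch (m : nat) (b : nat -> vertex m) : Prop :=
  b 0%N = [::] /\ forall n, exists i : 'I_m, b n.+1 = i :: b n.

Definition vanishes_at_boundary (R : realType) (m : nat) (u : vertex m -> R) : Prop :=
  forall b : nat -> vertex m, is_branch b -> ((fun n => u (b n) : R) @ \oo --> 0%R).

Definition is_eigenfunction (R : realType) (m : nat) (beta lam : R)
  (u : vertex m -> R) : Prop :=
  (exists C : R, forall x, `|u x| <= C) /\
  (exists x, u x != 0) /\
  (forall x, - Delta beta u x = lam * u x) /\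
  vanishes_at_boundary u.

Definition is_eigenvalue (R : realType) (m : nat) (beta lam : R) : Prop :=
  exists u : vertex m -> R, is_eigenfunction beta lam u.

Definition is_principal_eigenvalue (R : realType) (m : nat) (beta lam : R) : Prop :=
  0 < lam /\
  exists u : vertex m -> R, is_eigenfunction beta lam u /\ (forall x, 0 <= u x).

Definition Aset (R : realType) (m : nat) (beta : R) : set R :=
  [set lam | 0 < lam /\
     exists (v : vertex m -> R) (c C : R), 0 < c /\ c < C /\
       (forall x, c < v x /\ v x < C) /\
       (forall x, Delta beta v x + lam * v x <= 0)].

Definition lambda1 (R : realType) (m : nat) (beta : R) : R := sup (Aset m beta).

From mathcomp Require Import all_boot all_order all_algebra.
From mathcomp Require Import all_classical all_reals all_analysis.
From mathcomp Require Import ring lra.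
Import Order.TTheory GRing.Theory Num.Theory.
Import numFieldNormedType.Exports.
Set Implicit Arguments.
Unset Strict Implicit.
Unset Printing Implicit Defensive.

Local Open Scope ring_scope.
Local Open Scope classical_set_scope.

(* The eigenfunction is radial.  For radial u = F(|x|) the equation -Delta_beta u = l u is
   a recursion determining F from F(0) = 1, and lambda* is the supremum of the l >= 0 for
   which this profile stays positive.  Comparing the profiles for l0 and l0 + d through
   their ratio shows that positivity survives small increases of l as long as F_l0 is
   bounded away from 0; hence F_lambda* is positive, decreasing and tends to 0, i.e. it
   is a principal eigenfunction.  Finally lambda* = sup A_beta: a bounded positive
   supersolution for some l > lambda* would have to touch t F_lambda* from above at a
   finite level, which the equation forbids, while for l < lambda* the function
   F_lambda* + d (1 + q^k) is such a supersolution. *)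

Lemma sum_natS_expr_le (R : realFieldType) (z : R) (n : nat) : 0 <= z -> z < 1 ->
  \sum_(k < n) k.+1%:R * z ^+ k <= (1 - z) ^-2.
Proof.
move=> z_ge0 z_lt1; have z1 : 1 - z != 0 by rewrite subr_eq0 eq_sym lt_eqF.
have -> : \sum_(k < n) k.+1%:R * z ^+ k
          = (1 - z ^+ n) / (1 - z) ^+ 2 - n%:R * z ^+ n / (1 - z).
  elim: n => [|n IH]; first by rewrite big_ord0 expr0 subrr !mul0r subr0.
  by rewrite big_ord_recr /= IH [z ^+ n.+1]exprS -natr1; field.
have zn_ge0 : 0 <= z ^+ n by rewrite exprn_ge0.
have : 0 <= n%:R * z ^+ n / (1 - z) by rewrite !mulr_ge0 // invr_ge0 subr_ge0 ltW.
have : (1 - z ^+ n) / (1 - z) ^+ 2 <= (1 - z) ^-2.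
  by rewrite ler_pdivrMr ?exprn_gt0 ?subr_gt0 // mulVf ?expf_neq0 //; lra.
lra.
Qed.

Lemma exists_expr_ge (R : realType) (r a : R) : 1 < r -> exists n, a <= r ^+ n.
Proof.
move=> r_gt1; have r_gt0 : 0 < r := lt_trans ltr01 r_gt1.
have [a_le0 | a_gt0] := leP a 0; first by exists 0%N; rewrite expr0 (le_trans a_le0).
have : r^-1 ^+ n @[n --> \oo] --> (0 : R).
  by rewrite exprn_geometric; apply: cvg_geometric; rewrite ger0_norm ?invf_lt1 ?invr_ge0 ?ltW.
have ainv_gt0 : 0 < a^-1 by rewrite invr_gt0.
move=> /cvgr_lt/(_ _ ainv_gt0) rN; near \oo => N; exists N; apply/ltW.
have : r^-1 ^+ N < a^-1 by near: N; exact: rN.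
by rewrite exprVn ltf_pV2 ?posrE ?exprn_gt0.
Unshelve. all: by end_near.
Qed.

Lemma exists_sup_ratio (R : realType) (T : Type) (u v : T -> R) (c0 : R) (x0 : T) :
  0 < c0 -> (forall y, c0 < v y) -> (forall y, u y <= 1) ->
  exists t, (forall y, u y <= t * v y) /\
            forall eps, 0 < eps -> exists x, (t - eps) * v x < u x.
Proof.
move=> c0_gt0 v_gt u_le1; have v_gt0 y : 0 < v y := lt_trans c0_gt0 (v_gt y).
set E := [set r | exists y, r = u y / v y].
have E_sup : has_sup E.
  split; first by exists (u x0 / v x0), x0.
  exists c0^-1 => _ [y ->]; rewrite ler_pdivrMr // mulrC ler_pdivlMr //.
  by rewrite (le_trans (ler_wpM2r (ltW c0_gt0) (u_le1 y))) // mul1r ltW.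
exists (sup E); split=> [y | eps eps_gt0].
  by rewrite -ler_pdivrMr //; apply: sup_upper_bound E_sup _ _; exists y.
have [_ [x ->] sup_lt] := sup_adherent eps_gt0 E_sup.
by exists x; rewrite -ltr_pdivlMr.
Qed.

Lemma level_branch (m : nat) (br : nat -> vertex m) n : is_branch br -> level (br n) = n.
Proof.
move=> [br0 brS]; elim: n => [|n IH]; first by rewrite br0.
by have [i ->] := brS n; rewrite /level /= -/(level _) IH.
Qed.

Lemma radial_vanishes_at_boundary (R : realType) (m : nat) (phi : nat -> R) :
  phi n @[n --> \oo] --> 0 -> vanishes_at_boundary (fun x : vertex m => phi (level x)).
Proof. by move=> phi0 br br_branch; under eq_fun do rewrite level_branch //. Qed.

Section RadialEigenfunction.
Variables (R : realType) (m : nat) (b : R).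
Hypotheses (m_gt0 : (0 < m)%N) (b_gt0 : 0 < b) (b_lt_half : b < 1 / 2).
Local Notation p := (pbeta b).
Local Notation c := ((1 - b)^-1).

(* For radial u = F(|x|), the equations -Delta_beta u = l u at levels 0, ..., n are
   equivalent to F(n+1) - F(n) = - l p^n S(n) with S(n) = 1 + c (F(1) + ... + F(n));
   we shoot from F(0) = 1 along this recursion. *)
Fixpoint shoot_pair (l : R) (n : nat) : R * R :=
  if n is n'.+1 then
    let FS := shoot_pair l n' in
    let F := FS.1 - l * p ^+ n' * FS.2 in (F, FS.2 + c * F)
  else (1, 1).

Definition shoot l n := (shoot_pair l n).1.
Definition shoot_sum l n := (shoot_pair l n).2.
Arguments shoot : simpl never.
Arguments shoot_sum : simpl never.

Lemma shoot_root l : shoot l 0 = 1. Proof. by []. Qed.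
Lemma shoot_sum_root l : shoot_sum l 0 = 1. Proof. by []. Qed.

Lemma shootS l n : shoot l n.+1 = shoot l n - l * p ^+ n * shoot_sum l n.
Proof. by []. Qed.

Lemma shoot_sumS l n : shoot_sum l n.+1 = shoot_sum l n + c * shoot l n.+1.
Proof. by []. Qed.

Lemma shoot_sumE l n : shoot_sum l n = 1 + c * \sum_(j < n) shoot l j.+1.
Proof.
elim: n => [|n IH]; first by rewrite big_ord0 mulr0 addr0.
by rewrite shoot_sumS IH big_ord_recr /= -addrA -mulrDr.
Qed.

Lemma shoot_zero n : shoot 0 n = 1.
Proof. by elim: n => // n IH; rewrite shootS IH !mul0r subr0. Qed.

Lemma shoot_continuous n : continuous (fun l => shoot l n).
Proof.
suff : continuous (fun l => shoot l n) /\ continuous (fun l => shoot_sum l n) by case.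
elim: n => [|n [cF cS]]; first by split=> l; apply: cst_continuous.
have cF' : continuous (fun l => shoot l n.+1).
  move=> l; apply: (@continuousB _ _ _ (fun l => shoot l n) _ l (cF l)).
  have := @continuousM _ _ (fun l : R => l * p ^+ n) _ l _ (cS l); apply.
  have := @continuousM _ _ (fun l : R => l) (fun=> p ^+ n) l; apply.
    exact: cvg_id.
  exact: cst_continuous.
split=> // l; apply: (@continuousD _ _ _ (fun l => shoot_sum l n) _ l (cS l)).
have := @continuousM _ _ (fun=> c) _ l _ (cF' l); apply.
exact: cst_continuous.
Qed.

Lemma b_lt1 : b < 1.
Proof. by have := b_lt_half; lra. Qed.

Lemma pbetaE : p = b / (1 - b).
Proof. by rewrite /pbeta gt_eqF. Qed.

Lemma pbeta_gt0 : 0 < p.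
Proof. by rewrite pbetaE divr_gt0 // subr_gt0 b_lt1. Qed.

Lemma pbeta_lt1 : p < 1.
Proof. by rewrite pbetaE ltr_pdivrMr ?subr_gt0 ?b_lt1 //; have := b_lt_half; lra. Qed.

Lemma inv1B_gt0 : 0 < c.
Proof. by rewrite invr_gt0 subr_gt0 b_lt1. Qed.

Lemma shoot_sum_ge1 l n :
  (forall j, (j <= n)%N -> 0 <= shoot l j) -> 1 <= shoot_sum l n.
Proof.
move=> F_ge0; rewrite shoot_sumE lerDl mulr_ge0 ?(ltW inv1B_gt0) //.
by apply: sumr_ge0 => j _; apply: F_ge0.
Qed.

Lemma shootS_le l n : 0 <= l ->
  (forall j, (j <= n)%N -> 0 <= shoot l j) -> shoot l n.+1 <= shoot l n.
Proof.
move=> l_ge0 F_ge0; rewrite shootS gerBl !mulr_ge0 ?exprn_ge0 ?(ltW pbeta_gt0) //.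
exact: le_trans ler01 (shoot_sum_ge1 F_ge0).
Qed.

Lemma shootS_lt l n : 0 < l ->
  (forall j, (j <= n)%N -> 0 <= shoot l j) -> shoot l n.+1 < shoot l n.
Proof.
move=> l_gt0 F_ge0; rewrite shootS gtrBl !mulr_gt0 ?exprn_gt0 ?pbeta_gt0 //.
exact: lt_le_trans ltr01 (shoot_sum_ge1 F_ge0).
Qed.

Lemma shoot_le1 l n : 0 <= l ->
  (forall j, (j < n)%N -> 0 <= shoot l j) -> shoot l n <= 1.
Proof.
move=> l_ge0; elim: n => [//|n IH] F_ge0.
apply: le_trans (shootS_le l_ge0 F_ge0) _.
by apply: IH => j /ltnW; apply: F_ge0.
Qed.

Lemma shoot_anti l j n : 0 <= l -> (forall k, 0 <= shoot l k) ->
  (j <= n)%N -> shoot l n <= shoot l j.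
Proof.
move=> l_ge0 F_ge0 /subnK <-; elim: (n - j)%N => [//|k IH].
by apply: le_trans IH; apply: shootS_le.
Qed.

(* A discrete Wronskian of the solutions for two eigenvalue parameters. *)
Lemma shoot_cross l0 l n :
  l0 * shoot_sum l0 n * shoot l n - l * shoot l0 n * shoot_sum l n =
  - (l - l0) * (1 + c * \sum_(j < n) shoot l0 j.+1 * shoot l j.+1).
Proof.
elim: n => [|n IH]; first by rewrite big_ord0 !shoot_root !shoot_sum_root; ring.
rewrite big_ord_recr /=.
transitivity (- (l - l0) * (1 + c * \sum_(j < n) shoot l0 j.+1 * shoot l j.+1)
              - (l - l0) * c * (shoot l0 n.+1 * shoot l n.+1)); last by ring.
by rewrite -IH !shoot_sumS !shootS; ring.
Qed.

Lemma shoot_ratio_succ l0 l n : shoot l0 n != 0 -> shoot l0 n.+1 != 0 ->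
  shoot l n.+1 / shoot l0 n.+1 = shoot l n / shoot l0 n
   - (l - l0) * p ^+ n * (1 + c * \sum_(j < n) shoot l0 j.+1 * shoot l j.+1)
     / (shoot l0 n * shoot l0 n.+1).
Proof.
move=> F0n F0n1; rewrite [(l - l0) * _ * _]mulrAC.
have -> : (l - l0) * (1 + c * \sum_(j < n) shoot l0 j.+1 * shoot l j.+1)
          = l * shoot l0 n * shoot_sum l n - l0 * shoot_sum l0 n * shoot l n.
  by apply: oppr_inj; rewrite opprB shoot_cross mulNr.
by move: F0n1; rewrite !shootS => F0n1; field; rewrite F0n F0n1.
Qed.

Lemma sum_expr_shoot_sum_le l n : 0 <= l -> (forall k, 0 <= shoot l k) ->
  \sum_(k < n) p ^+ k * shoot_sum l k <= (1 + c) * (1 - p) ^-2.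
Proof.
move=> l_ge0 F_ge0.
have S_le k : shoot_sum l k <= (1 + c) * k.+1%:R.
  rewrite shoot_sumE -natr1 mulrDr mulr1 [X in _ <= X]addrC.
  apply: lerD; first by rewrite lerDl ltW ?inv1B_gt0.
  apply: le_trans (_ : c * k%:R <= _); last by rewrite ler_wpM2r // lerDr.
  rewrite ler_wpM2l ?(ltW inv1B_gt0) //.
  apply: le_trans (_ : \sum_(j < k) (1 : R) <= _); last by rewrite sumr_const card_ord.
  by apply: ler_sum => j _; apply: shoot_le1 => // i _.
apply: le_trans (_ : \sum_(k < n) (1 + c) * (k.+1%:R * p ^+ k) <= _).
  apply: ler_sum => k _; rewrite [X in _ <= X]mulrA [X in _ <= X]mulrC.
  by apply: ler_wpM2l; rewrite ?exprn_ge0 ?(ltW pbeta_gt0).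
rewrite -mulr_sumr ler_wpM2l ?sum_natS_expr_le ?(ltW pbeta_gt0) ?pbeta_lt1 //.
by rewrite addr_ge0 ?(ltW inv1B_gt0).
Qed.

Lemma shoot_ratio_ge l0 L d n :
  0 <= l0 -> 0 < L -> (forall k, L <= shoot l0 k) -> 0 <= d ->
  (forall j, (j < n)%N -> 0 <= shoot (l0 + d) j) ->
  1 - d / L ^+ 2 * \sum_(k < n) p ^+ k * shoot_sum l0 k
    <= shoot (l0 + d) n / shoot l0 n.
Proof.
move=> l0_ge0 L_gt0 FL d_ge0; set l := l0 + d.
have l_ge0 : 0 <= l by rewrite addr_ge0.
have F0_gt0 k : 0 < shoot l0 k := lt_le_trans L_gt0 (FL k).
elim: n => [|n IH] Fl_ge0.
  by rewrite big_ord0 mulr0 subr0 !shoot_root divr1.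
rewrite big_ord_recr /= mulrDr opprD addrA shoot_ratio_succ ?gt_eqF //.
apply: lerB; first by apply: IH => j /ltnW; apply: Fl_ge0.
have -> : l - l0 = d by rewrite /l addrAC subrr add0r.
set U := 1 + _.
have U_ge0 : 0 <= U.
  rewrite addr_ge0 // mulr_ge0 ?(ltW inv1B_gt0) //.
  by apply: sumr_ge0 => j _; rewrite mulr_ge0 ?(ltW (F0_gt0 _)) // Fl_ge0 // ltnS.
have U_le : U <= shoot_sum l0 n.
  rewrite shoot_sumE lerD2l ler_wpM2l ?(ltW inv1B_gt0) //.
  apply: ler_sum => j _; rewrite ler_piMr ?(ltW (F0_gt0 _)) //.
  by apply: shoot_le1 => // i ij; apply: Fl_ge0; apply: leq_trans ij _; apply: leqW.
have dp_ge0 : 0 <= d * p ^+ n by rewrite mulr_ge0 ?exprn_ge0 ?(ltW pbeta_gt0).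
have -> : d / L ^+ 2 * (p ^+ n * shoot_sum l0 n) = d * p ^+ n * shoot_sum l0 n / L ^+ 2.
  by rewrite mulrAC mulrA.
apply: ler_pM.
- exact: mulr_ge0.
- by rewrite invr_ge0 mulr_ge0 ?(ltW (F0_gt0 _)).
- exact: ler_wpM2l.
by rewrite lef_pV2 ?posrE ?mulr_gt0 ?exprn_gt0 // expr2 ler_pM ?(ltW L_gt0).
Qed.

Lemma shoot_gt0_perturb l0 L : 0 <= l0 -> 0 < L -> (forall k, L <= shoot l0 k) ->
  exists2 l, l0 < l & forall n, 0 < shoot l n.
Proof.
move=> l0_ge0 L_gt0 FL.
have F0_gt0 k : 0 < shoot l0 k := lt_le_trans L_gt0 (FL k).
set B := (1 + c) * (1 - p) ^-2.
have B_gt0 : 0 < B.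
  by rewrite mulr_gt0 ?addr_gt0 ?inv1B_gt0 ?invr_gt0 ?exprn_gt0 ?subr_gt0 ?pbeta_lt1.
(* With this d, [shoot_ratio_ge] keeps F_(l0 + d) / F_l0 >= 1 - d B / L^2 = 1/2,
   so positivity propagates from level to level. *)
set d := L ^+ 2 / (2 * B).
have d_gt0 : 0 < d by rewrite /d divr_gt0 ?exprn_gt0 // mulr_gt0.
exists (l0 + d); first by rewrite ltrDl.
suff Fl_gt0 n j : (j < n)%N -> 0 < shoot (l0 + d) j by move=> n; apply: (Fl_gt0 n.+1).
elim: n j => [//|n IH] j; rewrite ltnS leq_eqVlt => /orP[/eqP-> | /IH //].
have ratio := shoot_ratio_ge l0_ge0 L_gt0 FL (ltW d_gt0) (fun j jn => ltW (IH j jn)).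
have sum_le := sum_expr_shoot_sum_le n l0_ge0 (fun k => ltW (F0_gt0 k)).
have half_le : 1 / 2 <= shoot (l0 + d) n / shoot l0 n.
  apply: le_trans ratio.
  have -> : 1 / 2 = 1 - d / L ^+ 2 * B by rewrite /d; field; rewrite !gt_eqF.
  by rewrite lerB // ler_wpM2l // divr_ge0 ?exprn_ge0 ?ltW.
have := F0_gt0 n; move: half_le; rewrite ler_pdivlMr // => half_le F0n.
by apply: lt_le_trans half_le; rewrite mulr_gt0.
Qed.

Definition shoot_pos_set := [set l | 0 <= l /\ forall n, 0 < shoot l n].

Definition lambda_star := sup shoot_pos_set.

Lemma has_sup_shoot_pos_set : has_sup shoot_pos_set.
Proof.
split; first by exists 0; split=> // n; rewrite shoot_zero.
exists 1 => l [_ /(_ 1%N)].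
by rewrite shootS shoot_root shoot_sum_root expr0 !mulr1 subr_gt0 => /ltW.
Qed.

Lemma shoot_pos_set_le l : shoot_pos_set l -> l <= lambda_star.
Proof. by move=> Ql; apply: sup_upper_bound has_sup_shoot_pos_set _ Ql. Qed.

Lemma lambda_star_gt0 : 0 < lambda_star.
Proof.
have F0_ge1 k : 1 <= shoot 0 k by rewrite shoot_zero.
have [l l_gt0 Fl_gt0] := shoot_gt0_perturb (lexx 0) ltr01 F0_ge1.
by apply: lt_le_trans l_gt0 (shoot_pos_set_le (conj (ltW l_gt0) Fl_gt0)).
Qed.

Lemma shoot_lambda_star_ge0 n : 0 <= shoot lambda_star n.
Proof.
rewrite leNgt; apply/negP => F_lt0.
have near_lt0 := @cvgr_lt R R (nbhs lambda_star) _ (shoot^~ n) _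
  (@shoot_continuous n lambda_star) 0 F_lt0.
have /nbhs_ballP[e e_gt0 ball_lt0] : nbhs lambda_star [set l | shoot l n < 0].
  exact: near_lt0.
have [l Ql] := sup_adherent e_gt0 has_sup_shoot_pos_set; rewrite -/lambda_star => l_gt.
have l_le := shoot_pos_set_le Ql.
suff : shoot l n < 0 by rewrite ltNge (ltW (Ql.2 n)).
by apply: ball_lt0; rewrite -ball_normE /ball_ /= ger0_norm ?subr_ge0 //; lra.
Qed.

Lemma shoot_lambda_starS_lt n : shoot lambda_star n.+1 < shoot lambda_star n.
Proof. by apply: shootS_lt lambda_star_gt0 _ => j _; apply: shoot_lambda_star_ge0. Qed.

Lemma shoot_lambda_star_gt0 n : 0 < shoot lambda_star n.
Proof.
rewrite lt_neqAle shoot_lambda_star_ge0 andbT; apply/eqP => F_eq0.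
by have := shoot_lambda_starS_lt n; rewrite -F_eq0 ltNge shoot_lambda_star_ge0.
Qed.

Lemma shoot_lambda_star_anti j n : (j <= n)%N -> shoot lambda_star n <= shoot lambda_star j.
Proof. by apply: shoot_anti (ltW lambda_star_gt0) shoot_lambda_star_ge0. Qed.

Lemma shoot_lambda_star_small e : 0 < e -> exists n, shoot lambda_star n < e.
Proof.
move=> e_gt0; apply: contrapT => no_small.
have F_ge k : e <= shoot lambda_star k.
  by rewrite leNgt; apply/negP => Fk; apply: no_small; exists k.
have [l l_gt Fl_gt0] := shoot_gt0_perturb (ltW lambda_star_gt0) e_gt0 F_ge.
have Ql : shoot_pos_set l := conj (ltW (lt_trans lambda_star_gt0 l_gt)) Fl_gt0.
by have := shoot_pos_set_le Ql; rewrite leNgt l_gt.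
Qed.

Lemma shoot_lambda_star_cvg0 : shoot lambda_star n @[n --> \oo] --> 0.
Proof.
apply/cvgrPdist_lt => e e_gt0; have [N FN] := shoot_lambda_star_small e_gt0.
exists N => // n /= N_le_n; rewrite sub0r normrN ger0_norm ?(ltW (shoot_lambda_star_gt0 n)) //.
exact: le_lt_trans (shoot_lambda_star_anti N_le_n) FN.
Qed.

Definition radial_Delta (phi : nat -> R) (k : nat) : R :=
  if k is k'.+1 then (b * phi k' + (1 - b) * phi k.+1 - phi k) * p ^- k
  else phi 1%N - phi 0%N.

Lemma Delta_radial (phi : nat -> R) (x : vertex m) :
  Delta b (fun y => phi (level y)) x = radial_Delta phi (level x).
Proof.
have m_neq0 : m%:R != 0 :> R by rewrite pnatr_eq0 -lt0n.
case: x => [|a x] /=; rewrite sumr_const card_ord -mulr_natr /level /=; first by field.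
by congr ((_ + _ - _) * _); field.
Qed.

Lemma radial_Delta_shoot l k : radial_Delta (shoot l) k = - l * shoot l k.
Proof.
case: k => [|k] /=; first by rewrite shootS shoot_root shoot_sum_root expr0; ring.
have -> : shoot l k = shoot l k.+1 + l * p ^+ k * shoot_sum l k by rewrite shootS; ring.
rewrite [shoot l k.+2]shootS shoot_sumS exprS pbetaE.
have p_neq0 : (b / (1 - b)) ^+ k != 0 by rewrite -pbetaE expf_neq0 // gt_eqF ?pbeta_gt0.
have b1_neq0 : 1 - b != 0 by rewrite subr_eq0 eq_sym lt_eqF ?b_lt1.
move: p_neq0; set P := _ ^+ k => p_neq0; field.
by rewrite p_neq0 b1_neq0 gt_eqF.
Qed.

Lemma Delta_scale_sub (t : R) (v u : vertex m -> R) x :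
  Delta b (fun y => t * v y - u y) x = t * Delta b v x - Delta b u x.
Proof. by case: x => [|a x] /=; rewrite sumrB -mulr_sumr; ring. Qed.

Lemma Delta_ge_nonneg (w : vertex m -> R) x : (forall y, 0 <= w y) ->
  - w x * p ^- level x <= Delta b w x.
Proof.
move=> w_ge0; have sum_ge0 z : 0 <= \sum_(i < m) w (i :: z) by apply: sumr_ge0.
case: x => [|a x] /=.
  have : 0 <= m%:R^-1 * \sum_(i < m) w [:: i] by rewrite mulr_ge0 ?invr_ge0.
  by rewrite expr0 invr1 mulr1; lra.
rewrite /level /=; apply: ler_wpM2r; first by rewrite invr_ge0 exprn_ge0 ?(ltW pbeta_gt0).
have : 0 <= (1 - b) / m%:R * \sum_(i < m) w [:: i, a & x].
  by rewrite mulr_ge0 ?divr_ge0 ?subr_ge0 ?(ltW b_lt1).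
have : 0 <= b * w x by rewrite mulr_ge0 ?(ltW b_gt0).
lra.
Qed.

Lemma Delta_shoot_lambda_star (x : vertex m) :
  Delta b (fun y => shoot lambda_star (level y)) x = - lambda_star * shoot lambda_star (level x).
Proof. by rewrite Delta_radial radial_Delta_shoot. Qed.

Lemma supersolution_gap (v : vertex m -> R) l t N (x : vertex m) :
  (forall y, Delta b v y + l * v y <= 0) -> lambda_star <= l -> 0 <= t ->
  (forall y, shoot lambda_star (level y) <= t * v y) -> (level x <= N)%N ->
  (l - lambda_star) * shoot lambda_star (level x) * p ^+ N
    <= t * v x - shoot lambda_star (level x).
Proof.
move=> v_super l_ge t_ge0 u_le x_le_N; pose u (y : vertex m) := shoot lambda_star (level y).
have l_ge0 : 0 <= l := le_trans (ltW lambda_star_gt0) l_ge.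
have w_ge0 y : 0 <= t * v y - u y by rewrite subr_ge0; apply: u_le.
have := Delta_ge_nonneg x w_ge0; rewrite Delta_scale_sub Delta_shoot_lambda_star -/(u x).
have := mulr_ge0_le0 t_ge0 (v_super x).
have : l * u x <= l * (t * v x) by rewrite ler_wpM2l ?u_le.
move=> lu_le tDv_le Dw_ge.
have gap : (l - lambda_star) * u x <= (t * v x - u x) * p ^- level x by lra.
apply: le_trans (_ : (l - lambda_star) * u x * p ^+ level x <= _).
  rewrite ler_wpM2l ?mulr_ge0 ?subr_ge0 ?(ltW (shoot_lambda_star_gt0 _)) //.
  by rewrite ler_wiXn2l ?(ltW pbeta_gt0) ?(ltW pbeta_lt1).
by rewrite -ler_pdivlMr ?exprn_gt0 ?pbeta_gt0.
Qed.

Lemma Aset_le_lambda_star l : Aset m b l -> l <= lambda_star.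
Proof.
move=> [l_gt0 [v [c0 [C [c0_gt0 [_ [v_bnd v_super]]]]]]].
rewrite leNgt; apply/negP => lt_l.
set u := fun y : vertex m => shoot lambda_star (level y).
have u_le1 y : u y <= 1 by rewrite -(shoot_root lambda_star) shoot_lambda_star_anti.
have [t [u_le near_sup]] := exists_sup_ratio [::] c0_gt0 (fun y => (v_bnd y).1) u_le1.
have v_gt0 y : 0 < v y := lt_trans c0_gt0 (v_bnd y).1.
have C_gt0 : 0 < C := lt_trans (v_gt0 [::]) (v_bnd [::]).2.
have t_gt0 : 0 < t.
  by rewrite -(pmulr_lgt0 _ (v_gt0 [::])) (lt_le_trans _ (u_le [::])) ?shoot_lambda_star_gt0.
have [N uN] : exists N, shoot lambda_star N < t * c0 / 2.
  by apply: shoot_lambda_star_small; rewrite divr_gt0 ?mulr_gt0.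
(* A point where u <= t v is nearly tight lies below level N, so by [supersolution_gap]
   its gap t v - u is at least delta. *)
set delta := (l - lambda_star) * (t * c0 / 2) * p ^+ N.
set eps := Num.min (t / 2) (delta / C).
have eps_gt0 : 0 < eps.
  by rewrite lt_min divr_gt0 //= !mulr_gt0 ?subr_gt0 ?exprn_gt0 ?pbeta_gt0 ?invr_gt0.
have [x ux_gt] := near_sup eps eps_gt0.
have ux_large : t * c0 / 2 < u x.
  apply: le_lt_trans ux_gt; rewrite mulrAC.
  apply: ler_pM; rewrite ?divr_ge0 ?(ltW t_gt0) ?(ltW c0_gt0) ?(ltW (v_bnd x).1) //.
  have : eps <= t / 2 by rewrite /eps ge_min lexx.
  lra.
have x_lt_N : (level x < N)%N.
  rewrite ltnNge; apply/negP => /shoot_lambda_star_anti FN.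
  by have := lt_trans (le_lt_trans FN uN) ux_large; rewrite ltxx.
have := supersolution_gap v_super (ltW lt_l) (ltW t_gt0) u_le (ltnW x_lt_N).
have : delta < (l - lambda_star) * u x * p ^+ N.
  by rewrite /delta ltr_pM2r ?exprn_gt0 ?pbeta_gt0 // ltr_pM2l ?subr_gt0.
have : eps * v x <= eps * C by rewrite ler_wpM2l ?(ltW eps_gt0) ?(ltW (v_bnd x).2).
have : eps * C <= delta by rewrite -ler_pdivlMr // ge_min lexx orbT.
rewrite -/(u x); lra.
Qed.

Lemma radial_DeltaD (f g : nat -> R) (d : R) k :
  radial_Delta (fun k => f k + d * g k) k = radial_Delta f k + d * radial_Delta g k.
Proof. by case: k => [|k] /=; ring. Qed.

Lemma radial_Delta_1Dexpr_le q k : p < q -> q < 1 ->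
  radial_Delta (fun k => 1 + q ^+ k) k <= - ((1 - b) * (1 - q) * (q - p) / q) * (q / p) ^+ k.
Proof.
move=> p_lt_q q_lt1; have q_gt0 : 0 < q := lt_trans pbeta_gt0 p_lt_q.
case: k => [|k] /=.
  have : (1 - b) * (1 - q) * (q - p) / q <= 1 - q.
    rewrite ler_pdivrMr // mulrAC [X in _ <= X]mulrC.
    apply: ler_wpM2r; first by rewrite subr_ge0 ltW.
    have : 0 <= b * (q - p) by rewrite mulr_ge0 ?subr_ge0 ?ltW.
    by have := pbeta_gt0; lra.
  by rewrite expr1 !expr0 mulr1; lra.
rewrite le_eqVlt; apply/orP; left; apply/eqP.
have p_neq0 : (b / (1 - b)) ^+ k != 0 by rewrite -pbetaE expf_neq0 // gt_eqF ?pbeta_gt0.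
have b1_neq0 : 1 - b != 0 by rewrite subr_eq0 eq_sym lt_eqF ?b_lt1.
rewrite expr_div_n !exprS pbetaE; move: p_neq0; set P := _ ^+ k => p_neq0.
by field; rewrite p_neq0 b1_neq0 !gt_eqF.
Qed.

Lemma radial_supersolution l q d N k :
  0 <= l -> l < lambda_star -> p < q -> q < 1 -> 0 < d ->
  2 * l <= (1 - b) * (1 - q) * (q - p) / q * (q / p) ^+ N ->
  2 * l * d = (lambda_star - l) * shoot lambda_star N ->
  radial_Delta (fun k => shoot lambda_star k + d * (1 + q ^+ k)) k
    + l * (shoot lambda_star k + d * (1 + q ^+ k)) <= 0.
Proof.
move=> l_ge0 l_lt p_lt_q q_lt1 d_gt0 lN dN; set F := shoot lambda_star.
set K := _ / q in lN; set r := q / p in lN.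
have q_gt0 : 0 < q := lt_trans pbeta_gt0 p_lt_q.
have K_gt0 : 0 < K by rewrite /K !mulr_gt0 ?invr_gt0 ?subr_gt0 ?b_lt1.
have r_ge1 : 1 <= r by rewrite /r ler_pdivlMr ?pbeta_gt0 // mul1r ltW.
rewrite radial_DeltaD radial_Delta_shoot -/F.
have := ler_wpM2l (ltW d_gt0) (radial_Delta_1Dexpr_le k p_lt_q q_lt1); rewrite -/K -/r.
have : l * (d * (1 + q ^+ k)) <= l * (d * 2).
  by rewrite ler_wpM2l // ler_wpM2l ?(ltW d_gt0) // lerD2l exprn_ile1 ?ltW.
have : 0 <= (lambda_star - l) * F k.
  by rewrite mulr_ge0 ?subr_ge0 ?ltW ?shoot_lambda_star_gt0.
case: (leqP N k) => [N_le_k | k_lt_N].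
  have : d * (2 * l) <= d * (K * r ^+ k).
    by rewrite ler_wpM2l ?(ltW d_gt0) // (le_trans lN) // ler_wpM2l ?(ltW K_gt0) ?ler_weXn2l.
  lra.
have : (lambda_star - l) * F N <= (lambda_star - l) * F k.
  by rewrite ler_wpM2l ?subr_ge0 ?(ltW l_lt) //; apply: shoot_lambda_star_anti; apply: ltnW.
have : 0 <= d * (K * r ^+ k).
  by rewrite mulr_ge0 ?(ltW d_gt0) // mulr_ge0 ?(ltW K_gt0) // exprn_ge0 // (le_trans ler01).
lra.
Qed.

Lemma lt_lambda_star_Aset l : 0 < l -> l < lambda_star -> Aset m b l.
Proof.
move=> l_gt0 l_lt; set F := shoot lambda_star.
have p_gt0 := pbeta_gt0; have p_lt1 := pbeta_lt1.
set q := (1 + p) / 2.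
have p_lt_q : p < q by rewrite /q; lra.
have q_lt1 : q < 1 by rewrite /q; lra.
have q_ge0 : 0 <= q by rewrite /q; lra.
set K := (1 - b) * (1 - q) * (q - p) / q.
have K_gt0 : 0 < K by rewrite /K !mulr_gt0 ?invr_gt0 ?subr_gt0 ?b_lt1 //; lra.
have [N rN] : exists N, 2 * l <= K * (q / p) ^+ N.
  have qp_gt1 : 1 < q / p by rewrite ltr_pdivlMr // mul1r.
  have [N rN] := exists_expr_ge (2 * l / K) qp_gt1.
  by exists N; move: rN; rewrite ler_pdivrMr // [_ * K]mulrC.
set d := (lambda_star - l) * F N / (2 * l).
have d_gt0 : 0 < d by rewrite /d !mulr_gt0 ?subr_gt0 ?invr_gt0 ?mulr_gt0 ?shoot_lambda_star_gt0.
have dN : 2 * l * d = (lambda_star - l) * F N by rewrite /d; field; rewrite gt_eqF.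
split=> //; exists (fun x => F (level x) + d * (1 + q ^+ level x)), (d / 2), (2 + 2 * d).
split; first by rewrite divr_gt0.
split; first by lra.
split=> x; last first.
  rewrite (Delta_radial (fun k => F k + d * (1 + q ^+ k))).
  exact: radial_supersolution (ltW l_gt0) l_lt p_lt_q q_lt1 d_gt0 rN dN.
have := shoot_lambda_star_gt0 (level x).
have := shoot_lambda_star_anti (leq0n (level x)); rewrite shoot_root.
have : 0 <= q ^+ level x <= 1 by rewrite exprn_ge0 // exprn_ile1 // ltW.
by case/andP=> qk_ge0 qk_le1; split; nra.
Qed.

Lemma lambda1E : lambda1 m b = lambda_star.
Proof.
have A_ub : ubound (Aset m b) lambda_star by move=> l /Aset_le_lambda_star.
have A_half : Aset m b (lambda_star / 2).
  by apply: lt_lambda_star_Aset; have := lambda_star_gt0; lra.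
have A_sup : has_sup (Aset m b) by split; [exists (lambda_star / 2) | exists lambda_star].
apply/eqP; rewrite eq_le ge_sup //=; last by exists (lambda_star / 2).
rewrite leNgt; apply/negP => lt_sup.
have : Aset m b ((lambda1 m b + lambda_star) / 2).
  apply: lt_lambda_star_Aset; last by lra.
  by have := sup_upper_bound A_sup A_half; have := lambda_star_gt0; rewrite -/(lambda1 m b); lra.
by move/(sup_upper_bound A_sup); rewrite -/(lambda1 m b); lra.
Qed.

End RadialEigenfunction.

Theorem theorem1p2 (R : realType) (m : nat) (beta : R) :
  (2 <= m)%N -> 0 < beta -> beta < 1 / 2 ->
  is_principal_eigenvalue m beta (lambda1 m beta) /\
  exists u : vertex m -> R,
    is_eigenfunction beta (lambda1 m beta) u /\
    u [::] = 1 /\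
    (forall x, 0 < u x) /\
    (forall x, Delta beta u x + lambda1 m beta * u x = 0) /\
    vanishes_at_boundary u /\
    exists f : nat -> R,
      (forall x, u x = f (level x)) /\ (forall n, f n.+1 < f n).
Proof.
move=> m_ge2 b_gt0 b_lt_half; have m_gt0 : (0 < m)%N by rewrite (leq_trans _ m_ge2).
rewrite (lambda1E m_gt0 b_gt0 b_lt_half); set l := lambda_star beta.
pose u (x : vertex m) := shoot beta l (level x).
have u_gt0 x : 0 < u x := shoot_lambda_star_gt0 b_gt0 b_lt_half _.
have u_eq x : Delta beta u x + l * u x = 0.
  by rewrite Delta_shoot_lambda_star // mulNr addNr.
have u_vanish : vanishes_at_boundary u.
  exact: radial_vanishes_at_boundary (shoot_lambda_star_cvg0 b_gt0 b_lt_half).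
have u_eigen : is_eigenfunction beta l u.
  split.
    exists 1 => x; rewrite ger0_norm ?(ltW (u_gt0 x)) //.
    by rewrite /u -(shoot_root beta l) shoot_lambda_star_anti.
  split; first by exists [::]; rewrite /u shoot_root oner_neq0.
  by split=> // x; apply/eqP; rewrite eqr_oppLR -subr_eq0 opprK u_eq.
split; first by split; [exact: lambda_star_gt0 | exists u; split=> // x; exact: ltW].
exists u; do !split=> //; exists (shoot beta l); split=> // n.
exact: shoot_lambda_starS_lt.
Qed.
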